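(* If $G$ is a regular graph on $d+2$ vertices that is not a complete multipartite graph, then $G$ has a spherical representation in $\mathbb{R}^d$.
   Context: Graphs are finite and simple. A finite set $S\subset\mathbb{R}^d$ is a 2-distance set if $\{\|p-q\| : p,q\in S, p\neq q\}$ has exactly two elements $\alpha_1>\alpha_2$; its associated graph has vertex set $S$ with $p,q$ adjacent iff $\|p-q\|=\alpha_1$. $G$ has a spherical representation in $\mathbb{R}^d$ if some 2-distance set in $\mathbb{R}^d$ lying on a $(d-1)$-dimensional sphere has associated graph $G$. *)

From HB Require Import structures.
From mathcomp Require Import all_boot all_order all_algebra.
From mathcomp Require Import reals.
Set Implicit Arguments. Unset Strict Implicit. Unset Printing Implicit Defensive.
Import Order.TTheory GRing.Theory Num.Theory.
Local Open Scope ring_scope.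

Definition simple_graph (V : finType) (adj : rel V) : Prop :=
  (forall u, ~~ adj u u) /\ (forall u v, adj u v = adj v u).

Definition degree (V : finType) (adj : rel V) (v : V) : nat := #|[set u | adj v u]|.
Definition regular (V : finType) (adj : rel V) : Prop :=
  exists k : nat, forall v, degree adj v = k.

(* Complete multipartite: the vertex set is partitioned into parts
   (given by a labelling f), and u,v are adjacent iff they lie in different parts. *)
Definition complete_multipartite (V : finType) (adj : rel V) : Prop :=
  exists f : V -> nat, forall u v, adj u v = (f u != f v).

Definition edist (R : realType) (d : nat) (x y : 'rV[R]_d) : R :=
  Num.sqrt (\sum_(i < d) (x ord0 i - y ord0 i) ^+ 2).

(* Spherical representation in R^d: an injective placement p of the vertices
   (so p(V) is a set S with |S| = |V|), lying on a sphere of positive radius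
   (a (d-1)-sphere), whose set of mutual distances is exactly {a1, a2} with
   a1 > a2, and with u ~ v iff ||p u - p v|| = a1. *)
Definition spherical_representation (R : realType) (d : nat)
    (V : finType) (adj : rel V) : Prop :=
  exists p : V -> 'rV[R]_d,
    injective p /\
    (exists (c : 'rV[R]_d) (r : R), 0 < r /\ forall v, edist (p v) c = r) /\
    exists a1 a2 : R,
      a2 < a1 /\
      (forall u v, u != v -> edist (p u) (p v) = a1 \/ edist (p u) (p v) = a2) /\
      (exists u v, u != v /\ edist (p u) (p v) = a1) /\
      (exists u v, u != v /\ edist (p u) (p v) = a2) /\
      (forall u v, u != v -> (adj u v <-> edist (p u) (p v) = a1)).

(* Let A be the adjacency matrix of the k-regular graph on N = d + 2 vertices
   and th the maximum of the Rayleigh quotient of A on the hyperplane orthogonal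
   to the all-ones vector 1, attained at a unit vector y.  A graph that is not
   complete multipartite has an edge uw and a vertex v adjacent to neither u
   nor w; the vector e_u + e_w - 2 e_v then shows th > 0.  The matrix
   I - A/th + a J with a = (k/th - 1)/N kills 1 by regularity, is positive
   semidefinite by maximality of th, and also kills y.  Having rank at most
   N - 2 = d, it is the Gram matrix of N vectors of R^d; their norms are all
   equal and their inner products are a - 1/th on edges and a on non-edges, so
   they form a spherical 2-distance set whose graph is the given one. *)

From HB Require Import structures.
(* Analysis comes first so that the finset lemmas and [Defs.edist] shadow their
   classical_sets and analysis namesakes. *)
From mathcomp Require Import boolp classical_sets topology normedtype derive.
From mathcomp Require Import all_boot all_order all_algebra reals.
From mathcomp Require Import ring lra.
From Pilot Require Import Defs.
Set Implicit Arguments. Unset Strict Implicit. Unset Printing Implicit Defensive.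
Import Order.TTheory GRing.Theory Num.Theory.
Import numFieldTopology.Exports numFieldNormedType.Exports.
Local Open Scope ring_scope.

Section QuadraticForms.
Variables (R : realFieldType) (I : finType).
Implicit Types (S : {set I}) (M : I -> I -> R) (x y z : I -> R).

Definition sym_form M := forall i j, M i j = M j i.

Definition qform S M x := \sum_(i in S) \sum_(j in S) x i * x j * M i j.
Definition bform S M x y := \sum_(i in S) \sum_(j in S) x i * y j * M i j.

Definition psd_on S M := forall x, 0 <= qform S M x.

Definition null_on S M z := forall i, i \in S -> \sum_(j in S) M i j * z j = 0.

Definition delta (i : I) : I -> R := fun j => (j == i)%:R.

Lemma sum_delta S (F : I -> R) j : j \in S -> \sum_(i in S) F i * delta j i = F j.
Proof.
move=> jS; rewrite (bigD1 j) //= /delta eqxx mulr1 big1 ?addr0 // => i /andP[_ /negbTE ->].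
by rewrite mulr0.
Qed.

Lemma eq_qform S M x y : {in S, x =1 y} -> qform S M x = qform S M y.
Proof.
by move=> exy; apply: eq_bigr => i iS; apply: eq_bigr => j jS; rewrite !exy.
Qed.

Lemma bformC S M x y : sym_form M -> bform S M x y = bform S M y x.
Proof.
move=> sM; rewrite /bform exchange_big; apply: eq_bigr => i _; apply: eq_bigr => j _.
by rewrite sM [x j * _]mulrC.
Qed.

Lemma qformDZ S M x y s : sym_form M ->
  qform S M (fun i => x i + s * y i) =
  qform S M x + s * (2 * bform S M x y) + s ^+ 2 * qform S M y.
Proof.
move=> sM; rewrite mulr2n mulrDl mul1r {2}bformC //.
rewrite /qform /bform -big_split /= !mulr_sumr -!big_split /=; apply: eq_bigr => i _.
rewrite -!big_split /= !mulr_sumr -!big_split /=; apply: eq_bigr => j _; ring.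
Qed.

Lemma qformZ S M c x : qform S M (fun i => c * x i) = c ^+ 2 * qform S M x.
Proof.
rewrite /qform mulr_sumr; apply: eq_bigr => i _; rewrite mulr_sumr.
by apply: eq_bigr => j _; ring.
Qed.

Lemma qform_delta S M i : i \in S -> qform S M (delta i) = M i i.
Proof.
move=> iS; rewrite /qform -(sum_delta (fun j => M j i) iS); apply: eq_bigr => j _.
rewrite -(sum_delta (fun l => M j l * delta i j) iS); apply: eq_bigr => l _.
by rewrite /=; ring.
Qed.

Lemma bform_null S M x z : null_on S M z -> bform S M x z = 0.
Proof.
move=> nz; rewrite /bform big1 // => i iS.
by rewrite (eq_bigr (fun j => x i * (M i j * z j))) -?mulr_sumr ?nz ?mulr0 // => j _; ring.
Qed.

Lemma qform_null S M z : null_on S M z -> qform S M z = 0.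
Proof. exact: bform_null. Qed.

Lemma null_onD S M x y a b : null_on S M x -> null_on S M y ->
  null_on S M (fun j => a * x j + b * y j).
Proof.
move=> nx ny i iS.
rewrite (eq_bigr (fun j => a * (M i j * x j) + b * (M i j * y j))) => [|j _]; last by ring.
by rewrite big_split -!mulr_sumr /= nx // ny // !mulr0 addr0.
Qed.

Lemma null_on_setD1 S M z i0 : null_on S M z -> i0 \in S -> z i0 = 0 ->
  null_on (S :\ i0) M z.
Proof.
move=> nz i0S z0 i /setD1P[_ iS]; have := nz i iS.
by rewrite (big_setD1 i0 i0S) /= z0 mulr0 add0r.
Qed.

Lemma quadratic_ge0_linear_coef0 (b c : R) :
  (forall s, 0 <= s * (2 * b) + s ^+ 2 * c) -> b = 0.
Proof.
move=> ge0; apply/eqP/negPn/negP => b_neq0.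
pose D := `|c| + 1.
have D_gt0 : 0 < D by rewrite ltr_pwDr.
have b2_gt0 : 0 < b ^+ 2 by rewrite exprn_even_gt0.
have := ge0 (- b / D).
have -> : - b / D * (2 * b) + (- b / D) ^+ 2 * c = b ^+ 2 * (c - 2 * D) / D ^+ 2.
  by field; rewrite gt_eqF.
rewrite pmulr_lge0 ?invr_gt0 ?exprn_gt0 // pmulr_rge0 //.
by have := ler_norm c; have := normr_ge0 c; rewrite /D; lra.
Qed.

Section PSD.
Variables (S : {set I}) (M : I -> I -> R).
Hypotheses (sM : sym_form M) (pM : psd_on S M).

Lemma psd_qform0_null z : qform S M z = 0 -> null_on S M z.
Proof.
move=> qz j jS.
have bz0 : bform S M z (delta j) = 0.
  apply: (@quadratic_ge0_linear_coef0 _ (qform S M (delta j))) => s.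
  by have := pM (fun i => z i + s * delta j i); rewrite qformDZ // qz add0r.
rewrite -[RHS]bz0 /bform; apply: eq_bigr => i _.
rewrite (sM j) mulrC -(sum_delta (fun l => z i * M i l) jS).
by apply: eq_bigr => l _; rewrite mulrAC.
Qed.

Lemma psd_diag0 i j : i \in S -> j \in S -> M i i = 0 -> M i j = 0.
Proof.
move=> iS jS; rewrite -(qform_delta M iS) => /psd_qform0_null/(_ j jS).
by rewrite sM (sum_delta (M j) iS).
Qed.

Lemma psd_on_subset S' : S' \subset S -> psd_on S' M.
Proof.
move=> sS'S x; have := pM (fun i => if i \in S' then x i else 0).
rewrite /qform (big_setID S') /= (setIidPr sS'S) [X in _ + X]big1 ?addr0 => [|i].
  congr (_ <= _); apply: eq_bigr => i iS'; rewrite (big_setID S') /= (setIidPr sS'S).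
  rewrite [X in _ + X]big1 ?addr0 => [|j /setDP[_ /negbTE ->]]; last by rewrite mulr0 mul0r.
  by apply: eq_bigr => j jS'; rewrite iS' jS'.
by move=> /setDP[_ /negbTE ->]; rewrite big1 // => j _; rewrite !mul0r.
Qed.

End PSD.

Lemma qform_setD1 S M x i0 : sym_form M -> i0 \in S ->
  qform S M x = x i0 ^+ 2 * M i0 i0
    + 2 * x i0 * \sum_(j in S :\ i0) M i0 j * x j + qform (S :\ i0) M x.
Proof.
move=> sM i0S; rewrite /qform (big_setD1 i0 i0S) (big_setD1 i0 i0S) /=.
under [X in _ + X = _]eq_bigr => i _ do rewrite (big_setD1 i0 i0S) /=.
rewrite big_split /= !mulr_sumr -!addrA; congr (_ + _).
rewrite addrA -big_split /=; congr (_ + _); apply: eq_bigr => j _.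
by rewrite (sM j); ring.
Qed.

Definition schur M i0 i j := M i j - M i i0 * M i0 j / M i0 i0.

Lemma sym_schur M i0 : sym_form M -> sym_form (schur M i0).
Proof. by move=> sM i j; rewrite /schur (sM j i) (sM j i0) (sM i0 i); ring. Qed.

Lemma psd_schur S M i0 : sym_form M -> i0 \in S -> psd_on S M ->
  psd_on (S :\ i0) (schur M i0).
Proof.
move=> sM i0S pM z; set a := M i0 i0; set b := \sum_(j in S :\ i0) M i0 j * z j.
pose z' i := if i == i0 then - b / a else z i.
have qz' : qform S M z' = qform (S :\ i0) M z - b ^+ 2 / a.
  rewrite (@qform_setD1 S M z' i0 sM i0S) (@eq_qform _ M z' z); last first.
    by move=> i /setD1P[ne_i0 _]; rewrite /z' (negbTE ne_i0).
  rewrite /z' eqxx.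
  rewrite (eq_bigr (fun j => M i0 j * z j)) -/b => [|j /setD1P[/negbTE -> //]].
  have [->|a_neq0] := eqVneq a 0; first by rewrite invr0 !mulr0; ring.
  by rewrite -/a; field.
have qS : qform (S :\ i0) (schur M i0) z = qform (S :\ i0) M z - b ^+ 2 / a.
  rewrite /qform /schur expr2 /b mulr_suml mulr_suml -sumrB; apply: eq_bigr => i _.
  rewrite mulr_sumr mulr_suml -sumrB; apply: eq_bigr => j _; rewrite (sM i i0); ring.
by have := pM z'; rewrite qz' -qS.
Qed.

End QuadraticForms.

Arguments delta {R I} i.

Section GramRealization.
Variables (R : rcfType) (I : finType).
Implicit Types (S : {set I}) (M : I -> I -> R).

Definition dotv m (u v : 'rV[R]_m) : R := \sum_(k < m) u ord0 k * v ord0 k.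

Lemma dotvC m (u v : 'rV[R]_m) : dotv u v = dotv v u.
Proof. by apply: eq_bigr => k _; rewrite mulrC. Qed.

Lemma dot0v m (v : 'rV[R]_m) : dotv 0 v = 0.
Proof. by rewrite /dotv big1 // => k _; rewrite mxE mul0r. Qed.

Lemma dotv_suml m S (c : I -> R) (q : I -> 'rV[R]_m) v :
  dotv (\sum_(j in S) c j *: q j) v = \sum_(j in S) c j * dotv (q j) v.
Proof.
rewrite /dotv; under eq_bigr do rewrite summxE mulr_suml.
rewrite exchange_big; apply: eq_bigr => j _; rewrite mulr_sumr.
by apply: eq_bigr => k _; rewrite mxE mulrA.
Qed.

Lemma dotv_row_mx m (a b : R) (u v : 'rV[R]_m) :
  dotv (row_mx a%:M u) (row_mx b%:M v) = a * b + dotv u v.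
Proof.
rewrite /dotv big_split_ord big_ord1; congr (_ + _).
  by rewrite !(@row_mxEl _ 1 1) !mxE.
by apply: eq_bigr => k _; rewrite !(@row_mxEr _ 1 1).
Qed.

Definition gram_on m S (p : I -> 'rV[R]_m) M :=
  forall i j, i \in S -> j \in S -> dotv (p i) (p j) = M i j.

Lemma gram_on_schur m S M i0 (p : I -> 'rV[R]_m) :
  sym_form M -> psd_on S M -> i0 \in S -> gram_on (S :\ i0) p (schur M i0) ->
  exists q : I -> 'rV[R]_(1 + m), gram_on S q M.
Proof.
move=> sM pM i0S gp; set a := M i0 i0; pose s := Num.sqrt a.
(* When [s = 0] the row of [i0] vanishes by [psd_diag0], so the junk value
   [x / 0 = 0] below is harmless. *)
have a_ge0 : 0 <= a by have := pM (delta i0); rewrite qform_delta.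
have ss : s * s = a by rewrite -expr2 sqr_sqrtr.
have divsK j : j \in S -> M i0 j / s * s = M i0 j.
  move=> jS; have [s0|/divfK //] := eqVneq s 0.
  by rewrite (psd_diag0 sM pM i0S jS) ?mul0r // -/a -ss s0 mulr0.
exists (fun i => if i == i0 then row_mx s%:M 0 else row_mx (M i0 i / s)%:M (p i)).
move=> i j iS jS.
have [->|ni] := eqVneq i i0; have [->|nj] := eqVneq j i0;
  rewrite dotv_row_mx ?dot0v ?addr0 ?[dotv _ 0]dotvC ?dot0v ?addr0.
- by rewrite ss.
- by rewrite mulrC divsK.
- by rewrite divsK // sM.
rewrite gp ?inE ?ni ?nj // /schur (sM i i0) -/a -ss.
have [s0|s_neq0] := eqVneq s 0; first by rewrite s0 !mulr0 invr0 !mulr0 subr0 add0r.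
by field.
Qed.

Lemma psd_gram m S M : sym_form M -> psd_on S M -> (#|S| <= m)%N ->
  exists p : I -> 'rV[R]_m, gram_on S p M.
Proof.
elim: m S M => [|m IHm] S M sM pM.
  by rewrite leqn0 cards_eq0 => /eqP->; exists (fun _ => 0) => i j; rewrite inE.
have [->|[i0 i0S]] := set_0Vmem S; first by exists (fun _ => 0) => i j; rewrite inE.
rewrite (cardsD1 i0) i0S add1n ltnS => cardS.
have [p gp] := IHm _ _ (sym_schur i0 sM) (psd_schur sM i0S pM) cardS.
exact: gram_on_schur sM pM i0S gp.
Qed.

Lemma gram_on_null m S M i0 (z : I -> R) (p : I -> 'rV[R]_m) :
  sym_form M -> i0 \in S -> z i0 != 0 -> null_on S M z ->
  gram_on (S :\ i0) p M -> exists q : I -> 'rV[R]_m, gram_on S q M.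
Proof.
move=> sM i0S z0 nz gp.
have nz' i : i \in S -> \sum_(j in S :\ i0) M i j * z j = - (M i i0 * z i0).
  by move=> iS; apply/eqP; rewrite -addr_eq0 addrC -(big_setD1 _ i0S) nz.
pose q0 := \sum_(j in S :\ i0) (- z j / z i0) *: p j.
have comb_null i : i \in S ->
    \sum_(j in S :\ i0) (- z j / z i0) * M i j = M i i0.
  move=> iS; rewrite (eq_bigr (fun j => - (z i0)^-1 * (M i j * z j))) => [|j _]; last by ring.
  by rewrite -mulr_sumr nz' //; field.
have q0p i : i \in S :\ i0 -> dotv q0 (p i) = M i0 i.
  move=> iS'; rewrite dotv_suml -[RHS]sM -comb_null; last by case/setD1P: iS'.
  by apply: eq_bigr => j jS'; rewrite gp // sM.
exists (fun i => if i == i0 then q0 else p i) => i j iS jS.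
have [->|ni] := eqVneq i i0; have [->|nj] := eqVneq j i0.
- rewrite {1}/q0 dotv_suml -comb_null //.
  by apply: eq_bigr => l lS; rewrite dotvC q0p // sM.
- by rewrite q0p // in_setD1 nj.
- by rewrite dotvC q0p ?in_setD1 ?ni // sM.
- by rewrite gp // in_setD1 ?ni ?nj.
Qed.

Lemma gram_on_null2 m S M (x y : I -> R) i0 i1 :
  sym_form M -> psd_on S M -> (#|S| <= m.+2)%N ->
  null_on S M x -> null_on S M y -> i0 \in S -> i1 \in S ->
  x i0 * y i1 != x i1 * y i0 ->
  exists p : I -> 'rV[R]_m, gram_on S p M.
Proof.
move=> sM pM cardS nx ny i0S i1S minor_neq0.
(* Combinations of [x] and [y] vanishing at [i0], resp. [i1], let
   [gram_on_null] add these two points back without new coordinates. *)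
have i1_neq_i0 : i1 != i0 by apply: contraNneq minor_neq0 => ->; rewrite mulrC.
have i1S' : i1 \in S :\ i0 by rewrite in_setD1 i1_neq_i0.
have [p2 gp2] : exists p : I -> 'rV[R]_m, gram_on (S :\ i0 :\ i1) p M.
  apply: psd_gram sM (psd_on_subset pM _) _.
    by rewrite (subset_trans (subD1set _ _)) ?subD1set.
  by move: cardS; rewrite (cardsD1 i0) i0S (cardsD1 i1 (S :\ i0)) i1S'.
have [p1 gp1] : exists p : I -> 'rV[R]_m, gram_on (S :\ i0) p M.
  have nz := null_onD (y i0) (- x i0) nx ny.
  apply: gram_on_null sM i1S' _ (null_on_setD1 nz i0S _) gp2.
    by rewrite mulNr subr_eq0 eq_sym [y i0 * _]mulrC.
  by rewrite mulNr mulrC subrr.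
apply: gram_on_null sM i0S _ (null_onD (y i1) (- x i1) nx ny) gp1.
by rewrite mulNr subr_eq0 mulrC.
Qed.

End GramRealization.

Lemma continuous_sum (R : numFieldType) (T : topologicalType) (I : finType) (S : {set I})
    (F : I -> T -> R) :
  (forall i, continuous (F i)) -> continuous (fun t => \sum_(i in S) F i t).
Proof. by move=> cF; apply: continuous_big => //; exact: add_continuous. Qed.

Section RayleighQuotient.
Variables (R : realType) (I : finType) (M : I -> I -> R).
Local Notation T := [set: I].

Definition sqnorm (x : I -> R) := \sum_(i in T) x i ^+ 2.
Definition sumv (x : I -> R) := \sum_(i in T) x i.

Lemma sqnorm_ge0 x : 0 <= sqnorm x.
Proof. by apply: sumr_ge0 => i _; exact: sqr_ge0. Qed.

Lemma sqr_le_sqnorm x i : x i ^+ 2 <= sqnorm x.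
Proof.
by rewrite /sqnorm (bigD1 i) ?in_setT //= lerDl; apply: sumr_ge0 => j _; exact: sqr_ge0.
Qed.

Let vec_of (y : 'rV[R]_#|I|) (i : I) : R := y ord0 (enum_rank i).

Let continuous_vec_of i : continuous (vec_of^~ i).
Proof. exact: coord_continuous. Qed.

Lemma max_unit_zero_sum : (exists x, sqnorm x = 1 /\ sumv x = 0) ->
  exists y, [/\ sqnorm y = 1, sumv y = 0 &
    forall z, sqnorm z = 1 -> sumv z = 0 -> qform T M z <= qform T M y].
Proof.
move=> [x [nx sx]].
pose K := [set y : 'rV[R]_#|I| | sqnorm (vec_of y) = 1 /\ sumv (vec_of y) = 0]%classic.
have vec_ofK (z : I -> R) : vec_of (\row_k z (enum_val k)) = z.
  by apply/funext => i; rewrite /vec_of mxE enum_rankK.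
have cn : continuous (fun y => sqnorm (vec_of y)).
  apply: continuous_sum => i y.
  exact: continuousM (@continuous_vec_of i y) (@continuous_vec_of i y).
have cs : continuous (fun y => sumv (vec_of y)) by exact: continuous_sum.
have cq : continuous (fun y => qform T M (vec_of y)).
  apply: continuous_sum => i; apply: continuous_sum => j y.
  exact: continuousM (continuousM (@continuous_vec_of i y) (@continuous_vec_of j y))
    (@cst_continuous _ _ (M i j) y).
have K_compact : compact K.
  apply: (subclosed_compact _ (rV_compact (fun _ => @segment_compact R (-1) 1))).
    rewrite (_ : K = (fun y => sqnorm (vec_of y)) @^-1` [set 1] `&`
                     (fun y => sumv (vec_of y)) @^-1` [set 0])%classic; last first.
      by apply/seteqP; split => y.
    by apply: closedI; apply: preimage_closed => //; exact: closed_eq.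
  move=> y [ny _] k /=; rewrite in_itv /=.
  have := sqr_le_sqnorm (vec_of y) (enum_val k).
  by rewrite ny /vec_of enum_valK; nra.
have K0 : (K !=set0)%classic.
  by exists (\row_k x (enum_val k)); rewrite /K /= vec_ofK.
have [y Ky ymax] := EVT_max_rV K0 K_compact (continuous_subspaceT cq).
move: Ky; rewrite in_setE => -[ny sy].
exists (vec_of y); split => // z nz sz.
by rewrite -(vec_ofK z); apply: ymax; rewrite in_setE /K /= vec_ofK.
Qed.

Lemma sqnorm_eq0 x : sqnorm x = 0 -> forall i, x i = 0.
Proof.
move=> /psumr_eq0P x0 i; apply/eqP; rewrite -sqrf_eq0 x0 // => j _; exact: sqr_ge0.
Qed.

Lemma sqnormZ c x : sqnorm (fun i => c * x i) = c ^+ 2 * sqnorm x.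
Proof. by rewrite /sqnorm mulr_sumr; apply: eq_bigr => i _; rewrite exprMn. Qed.

Lemma sumvZ c x : sumv (fun i => c * x i) = c * sumv x.
Proof. by rewrite /sumv mulr_sumr. Qed.

Lemma normalizing_factor x : sqnorm x != 0 ->
  let c := (Num.sqrt (sqnorm x))^-1 in c ^+ 2 * sqnorm x = 1.
Proof. by move=> nx /=; rewrite exprVn sqr_sqrtr ?sqnorm_ge0 // mulVf. Qed.

Lemma sumv0_nonconstant x : sumv x = 0 -> sqnorm x != 0 -> exists i0 i1, x i0 != x i1.
Proof.
move=> sx nx; have /existsP[i1 xi1] : [exists i, x i != 0].
  apply: contraNT nx => /existsPn x0; apply/eqP/big1 => i _.
  by rewrite (eqP (negbNE (x0 i))) expr0n.
have [/existsP[i0 xi0]|/existsPn xc] := boolP [exists i, x i != x i1].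
  by exists i0, i1.
have N_gt0 : (0 < #|I|)%N by apply/card_gt0P; exists i1.
move: sx; rewrite /sumv (eq_bigr (fun _ => x i1)) => [|i _]; last exact/eqP/negbNE/xc.
by rewrite sumr_const cardsT => /eqP; rewrite mulrn_eq0 (negbTE xi1) orbF eqn0Ngt N_gt0.
Qed.

Lemma rayleigh_max x0 : sumv x0 = 0 -> sqnorm x0 != 0 ->
  exists y, [/\ sqnorm y = 1, sumv y = 0 &
    forall z, sumv z = 0 -> qform T M z <= qform T M y * sqnorm z].
Proof.
move=> sx0 nx0; have [|y [ny sy ymax]] := max_unit_zero_sum.
  exists (fun i => (Num.sqrt (sqnorm x0))^-1 * x0 i).
  by rewrite sqnormZ sumvZ normalizing_factor // sx0 mulr0.
exists y; split => // z sz; have [nz0|nz] := eqVneq (sqnorm z) 0.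
  rewrite nz0 mulr0 (@eq_qform _ _ _ M z (fun i => 0 * z i)) ?qformZ ?expr0n ?mul0r //.
  by move=> i _; rewrite (sqnorm_eq0 nz0) mul0r.
have := ymax _ (etrans (sqnormZ _ z) (normalizing_factor nz)).
rewrite sumvZ sz mulr0 qformZ => /(_ erefl) /(ler_wpM2r (sqnorm_ge0 z)).
by rewrite mulrAC normalizing_factor ?mul1r.
Qed.

End RayleighQuotient.

Lemma sqdist_dotv (R : rcfType) d (x y : 'rV[R]_d) :
  \sum_(i < d) (x ord0 i - y ord0 i) ^+ 2 = dotv x x + dotv y y - 2 * dotv x y.
Proof. by rewrite /dotv mulr_sumr -big_split -sumrB; apply: eq_bigr => i _ /=; ring. Qed.

Lemma spherical_representation_of_gram (R : realType) d (V : finType) (adj : rel V)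
    (p : V -> 'rV[R]_d) (c b1 b2 : R) :
  0 < c -> b1 < b2 -> b2 < c ->
  (forall x, dotv (p x) (p x) = c) ->
  (forall x y, x != y -> dotv (p x) (p y) = if adj x y then b1 else b2) ->
  (exists u v, u != v /\ adj u v) -> (exists u v, u != v /\ ~~ adj u v) ->
  spherical_representation R d adj.
Proof.
move=> c_gt0 b12 b2c pc pb [u1 [v1 [uv1 adj1]]] [u2 [v2 [uv2 nadj2]]].
pose a b := Num.sqrt (2 * c - 2 * b).
have dist x y : x != y -> edist (p x) (p y) = a (if adj x y then b1 else b2).
  by move=> xy; rewrite /edist sqdist_dotv !pc pb // /a; congr Num.sqrt; ring.
have a21 : a b2 < a b1 by rewrite ltr_sqrt; lra.
exists p; split.
  move=> x y pxy; apply/eqP; apply: contraTT b2c => xy.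
  by have := pb _ _ xy; rewrite -pxy pc; case: (adj x y) => ->; apply/negP; lra.
split.
  exists 0, (Num.sqrt c); rewrite sqrtr_gt0; split => // x.
  by rewrite /edist -(pc x) /dotv; congr Num.sqrt; apply: eq_bigr => i _; rewrite mxE subr0.
exists (a b1), (a b2); split => //; split.
  by move=> x y xy; rewrite dist //; case: (adj x y); [left|right].
split; first by exists u1, v1; rewrite dist // adj1.
split; first by exists u2, v2; rewrite dist // (negbTE nadj2).
move=> x y xy; rewrite dist //; case: (adj x y); split => // eq_a.
by move: a21; rewrite eq_a ltxx.
Qed.

Lemma complete_multipartite_of_nonadj_trans (V : finType) (adj : rel V) :
  simple_graph adj -> (forall u v w, ~~ adj u v -> ~~ adj v w -> ~~ adj u w) ->
  complete_multipartite adj.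
Proof.
move=> [adjxx adjC] nonadj_trans.
have nonadj_ex u : has (fun x => ~~ adj u x) (enum V).
  by apply/hasP; exists u; rewrite ?mem_enum ?adjxx.
exists (fun u => find (fun x => ~~ adj u x) (enum V)) => u v.
have [uv|nuv] := boolP (adj u v); apply/esym.
  apply: contraTneq uv => eq_find_uv.
  apply: nonadj_trans (nth_find u (nonadj_ex u)) _.
  by rewrite adjC eq_find_uv (nth_find _ (nonadj_ex v)).
apply/negPn/eqP/eq_find => x; apply/idP/idP; apply: nonadj_trans => //.
by rewrite adjC.
Qed.

Lemma not_complete_multipartite_witness (V : finType) (adj : rel V) :
  simple_graph adj -> ~ complete_multipartite adj ->
  exists u v w, [/\ adj u w, ~~ adj u v & ~~ adj v w].
Proof.
move=> sg ncm.
have [//|none] := pselect (exists u v w, [/\ adj u w, ~~ adj u v & ~~ adj v w]).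
case: ncm; apply: complete_multipartite_of_nonadj_trans => // u v w uv vw.
by apply/negP => uw; apply: none; exists u, v, w.
Qed.

Section RegularGraph.
Variables (R : realType) (V : finType) (adj : rel V) (k : nat).
Hypotheses (adjxx : forall u, ~~ adj u u) (adjC : forall u v, adj u v = adj v u).
Hypothesis adj_regular : forall v, degree adj v = k.
Local Notation T := [set: V].
Local Notation N := #|V|.

Definition adjf (x y : V) : R := (adj x y)%:R.

Lemma sym_adjf : sym_form adjf.
Proof. by move=> x y; rewrite /adjf adjC. Qed.

Lemma sum_adjf x : \sum_(y in T) adjf x y = k%:R.
Proof.
rewrite -(adj_regular x) /degree -sum1_card natr_sum big_mkcond [RHS]big_mkcond /=.
by apply: eq_bigr => y _; rewrite !inE /adjf; case: (adj x y).
Qed.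

Section WitnessVector.
Variables (u v w : V).
Hypotheses (uw : adj u w) (uv : ~~ adj u v) (vw : ~~ adj v w).

Let x0 i : R := delta u i + delta w i - 2 * delta v i.

Let sum_mul_x0 (F : V -> R) : \sum_(i in T) F i * x0 i = F u + F w - 2 * F v.
Proof.
rewrite (eq_bigr (fun i => F i * delta u i + F i * delta w i - 2 * (F i * delta v i)));
  last by move=> i _; rewrite /x0; ring.
by rewrite sumrB big_split -mulr_sumr /= !sum_delta ?in_setT.
Qed.

Lemma witness_vector : exists x, [/\ sumv x = 0, sqnorm x = 6 & qform T adjf x = 2].
Proof.
have neq_uw : u != w by apply: contraTneq uw => ->.
have neq_uv : u != v by apply: contraTneq uw => ->.
have neq_vw : v != w by apply: contraTneq uw => <-.
have x0_val : [/\ x0 u = 1, x0 w = 1 & x0 v = -2].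
  rewrite /x0 /delta !eqxx (eq_sym w u) (eq_sym w v) (eq_sym v u).
  by rewrite (negbTE neq_uw) (negbTE neq_uv) (negbTE neq_vw) /=; split; ring.
case: x0_val => x0u x0w x0v.
exists x0; split.
- by rewrite /sumv; under eq_bigr do rewrite -[x0 _]mul1r; rewrite sum_mul_x0; ring.
- by rewrite /sqnorm; under eq_bigr do rewrite expr2; rewrite sum_mul_x0 x0u x0w x0v; ring.
rewrite /qform (eq_bigr (fun i => (\sum_(j in T) adjf i j * x0 j) * x0 i)); last first.
  by move=> i _; rewrite mulr_suml; apply: eq_bigr => j _; ring.
rewrite sum_mul_x0 !sum_mul_x0 /adjf !(negbTE (adjxx _)) (adjC w u) (adjC w v) (adjC v u).
by rewrite uw (negbTE uv) (negbTE vw) /=; ring.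
Qed.

End WitnessVector.

Section SphericalGram.
Variables (d : nat) (th : R).
Hypotheses (cardV : N = d.+2) (th_gt0 : 0 < th).
Hypothesis th_max : forall z, sumv z = 0 -> qform T adjf z <= th * sqnorm z.

Definition gram_shift := (th^-1 * k%:R - 1) / N%:R.
Definition sphere_gram x y := delta x y - th^-1 * adjf x y + gram_shift.

Let N_neq0 : N%:R != 0 :> R.
Proof. by rewrite cardV pnatr_eq0. Qed.

Lemma sym_sphere_gram : sym_form sphere_gram.
Proof. by move=> x y; rewrite /sphere_gram /delta eq_sym sym_adjf. Qed.

Lemma null_sphere_gram_one : null_on T sphere_gram (fun _ => 1).
Proof.
move=> i _; rewrite (eq_bigr (fun j => 1 * delta i j - th^-1 * adjf i j + gram_shift));
  last by move=> j _; rewrite /sphere_gram; ring.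
rewrite big_split sumrB /= sum_delta ?in_setT // -mulr_sumr sum_adjf sumr_const cardsT.
by rewrite /gram_shift -mulr_natr; field; rewrite N_neq0 lt0r_neq0.
Qed.

Lemma qform_sphere_gram z : qform T sphere_gram z =
  sqnorm z - th^-1 * qform T adjf z + gram_shift * sumv z ^+ 2.
Proof.
rewrite /qform /sqnorm /sumv expr2 big_distrlr /= !mulr_sumr -sumrB -big_split /=.
apply: eq_bigr => i _.
rewrite expr2 -[z i * z i](sum_delta (fun j => z i * z j) (in_setT i)).
rewrite !mulr_sumr -sumrB -big_split /=; apply: eq_bigr => j _; rewrite /sphere_gram; ring.
Qed.

Lemma psd_sphere_gram : psd_on T sphere_gram.
Proof.
move=> z; pose m := sumv z / N%:R; pose y i := z i - m.
have sy : sumv y = 0.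
  by rewrite /sumv sumrB sumr_const cardsT -mulr_natr /m divfK // subrr.
rewrite (@eq_qform _ _ _ _ z (fun i => y i + m * 1)) => [|i _]; last by rewrite /y; ring.
have b0 := bform_null y null_sphere_gram_one; have q0 := qform_null null_sphere_gram_one.
rewrite qformDZ ?b0 ?q0; last exact: sym_sphere_gram.
rewrite !mulr0 !addr0 qform_sphere_gram sy expr0n mulr0 addr0 subr_ge0.
by rewrite -[sqnorm y](mulKf (lt0r_neq0 th_gt0)) ler_wpM2l ?th_max ?invr_ge0 ?ltW.
Qed.

Lemma null_sphere_gram y : sumv y = 0 -> qform T adjf y = th * sqnorm y ->
  null_on T sphere_gram y.
Proof.
move=> sy qy; apply: (psd_qform0_null sym_sphere_gram psd_sphere_gram).
by rewrite qform_sphere_gram qy sy mulKf ?lt0r_neq0 // expr0n mulr0 addr0 subrr.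
Qed.

Lemma sphere_gram_diag x : sphere_gram x x = 1 + gram_shift.
Proof. by rewrite /sphere_gram /delta /adjf eqxx (negbTE (adjxx x)) mulr0 subr0. Qed.

Lemma sphere_gram_offdiag x y : x != y ->
  sphere_gram x y = if adj x y then gram_shift - th^-1 else gram_shift.
Proof.
by move=> nxy; rewrite /sphere_gram /delta /adjf eq_sym (negbTE nxy); case: (adj x y) => /=;
  ring.
Qed.

Lemma gram_shift_gtN1 : 0 < 1 + gram_shift.
Proof.
have -> : 1 + gram_shift = (N%:R - 1 + th^-1 * k%:R) / N%:R.
  by rewrite /gram_shift; field; rewrite N_neq0 lt0r_neq0.
have N_gt1 : 1 < N%:R :> R by rewrite cardV ltr1n.
have tk_ge0 : 0 <= th^-1 * k%:R by rewrite mulr_ge0 // invr_ge0 ltW.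
by rewrite divr_gt0 //; lra.
Qed.

Lemma sphere_gram_realization y : sumv y = 0 -> sqnorm y = 1 -> qform T adjf y = th ->
  exists p : V -> 'rV[R]_d, gram_on T p sphere_gram.
Proof.
move=> sy ny qy; have [|i0 [i1 y01]] := sumv0_nonconstant sy; first by rewrite ny oner_neq0.
apply: (gram_on_null2 (x := fun=> 1) (y := y) (i0 := i1) (i1 := i0)) (in_setT _) (in_setT _) _.
- exact: sym_sphere_gram.
- exact: psd_sphere_gram.
- by rewrite cardsT cardV.
- exact: null_sphere_gram_one.
- by apply: null_sphere_gram => //; rewrite qy ny mulr1.
- by rewrite !mul1r.
Qed.

Lemma spherical_representation_of_rayleigh y :
  sumv y = 0 -> sqnorm y = 1 -> qform T adjf y = th ->
  (exists u v, u != v /\ adj u v) -> (exists u v, u != v /\ ~~ adj u v) ->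
  spherical_representation R d adj.
Proof.
move=> sy ny qy edge nonedge; have [p gp] := sphere_gram_realization sy ny qy.
apply: (spherical_representation_of_gram (p := p) (c := 1 + gram_shift)
  (b1 := gram_shift - th^-1) (b2 := gram_shift)) => //.
- exact: gram_shift_gtN1.
- by rewrite ltrBlDr ltrDl invr_gt0.
- by rewrite ltrDr.
- by move=> x; rewrite gp ?in_setT // sphere_gram_diag.
- by move=> x z xz; rewrite gp ?in_setT // sphere_gram_offdiag.
Qed.

End SphericalGram.

End RegularGraph.

Theorem corollary6p2 (R : realType) (d : nat) (V : finType) (adj : rel V) :
  simple_graph adj ->
  #|V| = d.+2 ->
  regular adj ->
  ~ complete_multipartite adj ->
  spherical_representation R d adj.
Proof.
move=> sg cardV [k adj_regular] ncm; have [adjxx adjC] := sg.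
have [u [v [w [uw uv vw]]]] := not_complete_multipartite_witness sg ncm.
have [x0 [sx0 nx0 qx0]] := witness_vector R adjxx adjC uw uv vw.
have /(rayleigh_max (adjf R adj) sx0) [y [ny sy ymax]] : sqnorm x0 != 0.
  by rewrite nx0 pnatr_eq0.
apply: (spherical_representation_of_rayleigh adjxx adjC adj_regular cardV _ ymax sy ny erefl).
- by have := ymax x0 sx0; rewrite qx0 nx0; lra.
- by exists u, w; split => //; apply: contraTneq uw => ->.
- by exists u, v; split => //; apply: contraTneq uw => ->.
Qed.
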